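(* Let $X\in\{A_4,D_6,E_8\}$ with rank $n\in\{4,6,8\}$, and let $\alpha_1,\dots,\alpha_n$ be a basis of $\mathbb{R}^n$ equipped with an inner product $(\cdot\mid\cdot)$ such that $(\alpha_i\mid\alpha_i)=2$ and $2(\alpha_i\mid\alpha_j)/(\alpha_i\mid\alpha_i)$ is the Cartan matrix of $X$. Then there is no simply-laced affine double extension of $X$ with trivial projection kernel; that is, there do not exist vectors $\beta,\gamma\in\mathbb{R}^n=\mathrm{span}(\alpha_1,\dots,\alpha_n)$ such that the $(n+2)\times(n+2)$ matrix $C_{uv}=2(u\mid v)/(u\mid u)$, $u,v\in(\beta,\gamma,\alpha_1,\dots,\alpha_n)$, is a simply-laced Kac–Moody-type extension of the Cartan matrix of $X$ by two nodes, i.e. has all diagonal entries $2$, all off-diagonal entries in $\{0,-1\}$ (with $(\beta\mid\beta)=(\gamma\mid\gamma)=2$), and $\det C=0$.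
   Context: Dynkin labellings: $A_4$: chain $\alpha_1-\alpha_2-\alpha_3-\alpha_4$; $D_6$: chain $\alpha_1-\cdots-\alpha_5$ with $\alpha_6$ joined to $\alpha_4$; $E_8$: chain $\alpha_1-\cdots-\alpha_7$ with $\alpha_8$ joined to $\alpha_5$. The Cartan matrix of these simply-laced diagrams has diagonal entries $2$, entries $-1$ for joined nodes and $0$ otherwise. ''Trivial projection kernel'' means that both additional roots lie in the span of the simple roots of $X$ (so that they can be projected with the same linear projection as the roots of $X$). *)

From HB Require Import structures.
From mathcomp Require Import all_boot all_order all_algebra.
From mathcomp Require Import reals.
Set Implicit Arguments. Unset Strict Implicit. Unset Printing Implicit Defensive.
Import Order.TTheory GRing.Theory Num.Theory.
Local Open Scope ring_scope.

Inductive dynkin := A4 | D6 | E8.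

Definition rank (X : dynkin) : nat :=
  match X with A4 => 4 | D6 => 6 | E8 => 8 end.

(* Adjacency of (0-indexed) nodes: node k here is alpha_(k+1) of the paper.
   A4: chain 0-1-2-3.  D6: chain 0-..-4, node 5 joined to node 3.
   E8: chain 0-..-6, node 7 joined to node 4. *)
Definition chain_adj (m i j : nat) : bool :=
  [&& i < m, j < m & ((i == j.+1) || (j == i.+1))]%N.

Definition dynkin_adj (X : dynkin) (i j : nat) : bool :=
  match X with
  | A4 => chain_adj 4 i j
  | D6 => chain_adj 5 i j || ((i == 5) && (j == 3)) || ((i == 3) && (j == 5))
  | E8 => chain_adj 7 i j || ((i == 7) && (j == 4)) || ((i == 4) && (j == 7))
  end%N.

Definition cartan (R : ringType) (X : dynkin) : 'M[R]_(rank X) :=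
  \matrix_(i, j) (if i == j then 2 else if dynkin_adj X i j then -1 else 0).

Definition ip (R : ringType) (n : nat) (G : 'M[R]_n) (u v : 'cV[R]_n) : R :=
  (u^T *m G *m v) 0 0.

Definition inner_product (R : realFieldType) (n : nat) (G : 'M[R]_n) : Prop :=
  G^T = G /\ forall x : 'cV[R]_n, x != 0 -> 0 < ip G x x.

Definition gen_cartan (R : fieldType) (n m : nat) (G : 'M[R]_n)
  (V : 'M[R]_(n, m)) : 'M[R]_m :=
  \matrix_(i, j) (2 * ip G (col i V) (col j V) / ip G (col i V) (col i V)).

(* The family (beta, gamma, alpha_1, ..., alpha_n) as the columns of a matrix,
   where the alpha's are the columns of P. *)
Definition ext_family (R : ringType) (n : nat) (beta gamma : 'cV[R]_n)
  (P : 'M[R]_n) : 'M[R]_(n, 1 + 1 + n) :=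
  row_mx (row_mx beta gamma) P.

From HB Require Import structures.
From mathcomp Require Import all_boot all_order all_algebra.
From mathcomp Require Import reals.
Set Implicit Arguments. Unset Strict Implicit. Unset Printing Implicit Defensive.
Import Order.TTheory GRing.Theory Num.Theory.
Local Open Scope ring_scope.

(* Since (beta | alpha_j) is 0 or -1 for every j, beta = - sum_(j in S) omega_j
   for a set S of nodes, where the omega_j are the fundamental weights, and its
   norm is the quadratic form of the inverse Cartan matrix evaluated on the
   indicator of S.  Running over the 2^n subsets shows that for A_4, D_6 and E_8
   the only such vector of norm 2 is minus the highest root.  Hence beta = gamma
   and (beta | gamma) = 2, which is neither 0 nor -1: already the conditions on
   the off-diagonal entries cannot be met, whatever det C is. *)

Section InnerProductCoordinates.
Variables (R : comUnitRingType) (n : nat) (G P : 'M[R]_n).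

Lemma ip_colr (v : 'cV_n) j : ip G v (col j P) = (v^T *m G *m P) 0 j.
Proof. by rewrite /ip colE mulmxA -colE mxE. Qed.

Lemma ip_gram i j : ip G (col i P) (col j P) = (P^T *m G *m P) i j.
Proof. by rewrite ip_colr tr_col -!mulmxA -row_mul mxE !mulmxA. Qed.

Lemma scaled_ip_adj (K : 'M_n) (d : R) (v w : 'cV_n) :
    G^T = G -> P \in unitmx -> K *m (P^T *m G *m P) = d%:M ->
  d * ip G v w = ((v^T *m G *m P) *m K *m (w^T *m G *m P)^T) 0 0.
Proof.
move=> Gsym Pu KA.
have -> : (w^T *m G *m P)^T = P^T *m G *m P *m (invmx P *m w).
  by rewrite !trmx_mul trmxK Gsym -!mulmxA mulKVmx.
rewrite -mulmxA (mulmxA K) KA mul_scalar_mx -scalemxAr mxE.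
by rewrite -(mulmxA _ P) mulKVmx.
Qed.

End InnerProductCoordinates.

(* [\sum] is locked and does not reduce under [vm_compute]; these folds do. *)
Definition sumz (n : nat) (f : nat -> int) : int :=
  foldr (fun i acc => f i + acc) 0 (iota 0 n).

Lemma sumzE n f : sumz n f = \sum_(i < n) f i.
Proof.
rewrite /sumz -(big_mkord xpredT) /index_iota subn0.
by elim: (iota 0 n) => [|a r IH] /=; rewrite ?big_nil ?big_cons ?IH.
Qed.

Lemma all_iota_ord n (p : nat -> nat -> bool) :
  all (fun i => all (p i) (iota 0 n)) (iota 0 n) -> forall i j : 'I_n, p i j.
Proof.
by move=> /allP H i j; apply: (allP (H i _)); rewrite mem_iota ltn_ord.
Qed.

Definition mxz n (f : nat -> nat -> int) : 'M[int]_n := \matrix_(i, j) f i j.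

Definition indicator_row n (s : seq bool) : 'rV[int]_n :=
  \row_j (nth false s j)%:Z.

Definition qform n (K : nat -> nat -> int) (s t : seq bool) : int :=
  sumz n (fun j => sumz n (fun i => (nth false s i)%:Z * K i j) * (nth false t j)%:Z).

Lemma qformE n K s t :
  (indicator_row n s *m mxz n K *m (indicator_row n t)^T) 0 0 = qform n K s t.
Proof.
rewrite /qform mxE sumzE; apply: eq_bigr => j _.
by rewrite !mxE sumzE; congr (_ * _); apply: eq_bigr => i _; rewrite !mxE.
Qed.

Fixpoint bool_seqs (n : nat) : seq (seq bool) :=
  if n is n'.+1 then [seq b :: s | b <- [:: true; false], s <- bool_seqs n']
  else [:: [::]].

Lemma mem_bool_seqs s : s \in bool_seqs (size s).
Proof.
elim: s => [|b s IH] //.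
change (b :: s \in [seq b :: s | b <- [:: true; false], s <- bool_seqs (size s)]).
by apply: (allpairs_f (fun b s => b :: s)) => //; case: b.
Qed.

Lemma row_0N1_indicator (R : numDomainType) n (b : 'rV[R]_n) :
    (forall j, b 0 j = 0 \/ b 0 j = -1) ->
  exists2 s, s \in bool_seqs n & b = - map_mx intr (indicator_row n s).
Proof.
move=> b01; exists [seq b 0 j == -1 | j <- enum 'I_n].
  by have := mem_bool_seqs [seq b 0 j == -1 | j <- enum 'I_n]; rewrite size_map size_enum_ord.
apply/matrixP => i j; rewrite (ord1 i) !mxE (nth_map j) ?size_enum_ord // nth_ord_enum.
by case: (b01 j) => ->; rewrite ?eqxx // eq_sym oppr_eq0 oner_eq0 mulr0z oppr0.
Qed.

Definition adj_check n (K c : nat -> nat -> int) (d : int) : bool :=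
  all (fun i => all (fun j => sumz n (fun k => K i k * c k j) == d *+ (i == j))
                    (iota 0 n)) (iota 0 n).

Lemma adj_checkP n K c d : adj_check n K c d -> mxz n K *m mxz n c = d%:M.
Proof.
move=> /all_iota_ord chk; apply/matrixP => i j; move/eqP: (chk i j).
by rewrite !mxE sumzE => <-; apply: eq_bigr => k _; rewrite !mxE.
Qed.

Definition norm2_check n (K : nat -> nat -> int) (d : int) (theta : seq bool) : bool :=
  all (fun s => (qform n K s s == 2 * d) ==> (s == theta)) (bool_seqs n).

Section NormTwoCoordinates.
Variables (R : numDomainType) (n : nat) (G P : 'M[R]_n).
Variables (K : nat -> nat -> int) (d : int) (theta : seq bool).
Hypotheses (Gsym : G^T = G) (Pu : P \in unitmx) (d_neq0 : d != 0).
Hypothesis adj_gram : map_mx intr (mxz n K) *m (P^T *m G *m P) = (d%:~R)%:M.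
Hypothesis norm2 : norm2_check n K d theta.

Lemma norm2_coords (v : 'cV_n) :
    ip G v v = 2 -> (forall j, ip G v (col j P) = 0 \/ ip G v (col j P) = -1) ->
  v^T *m G *m P = - map_mx intr (indicator_row n theta).
Proof.
move=> vv2 v01; have [s s_in vE] : exists2 s, s \in bool_seqs n &
    v^T *m G *m P = - map_mx intr (indicator_row n s).
  by apply: row_0N1_indicator => j; rewrite -ip_colr.
suff qs : qform n K s s = 2 * d by move: (allP norm2 s s_in); rewrite qs eqxx => /eqP <-.
apply: (@intr_inj R).
have := scaled_ip_adj v v Gsym Pu adj_gram.
rewrite vE linearN /= !(mulNmx, mulmxN) opprK map_trmx -!map_mxM mxE qformE vv2.
by move=> <-; rewrite intrM mulrC.
Qed.

Lemma ip_norm2_coords (v w : 'cV_n) :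
    ip G v v = 2 -> (forall j, ip G v (col j P) = 0 \/ ip G v (col j P) = -1) ->
    ip G w w = 2 -> (forall j, ip G w (col j P) = 0 \/ ip G w (col j P) = -1) ->
  ip G v w = 2.
Proof.
move=> vv2 v01 ww2 w01; apply: (mulfI (_ : d%:~R != 0)); first by rewrite intr_eq0.
rewrite -[in RHS]vv2 !(scaled_ip_adj _ _ Gsym Pu adj_gram).
by rewrite (norm2_coords ww2 w01) -(norm2_coords vv2 v01).
Qed.

End NormTwoCoordinates.

Definition cartan_entry (X : dynkin) (i j : nat) : int :=
  if i == j then 2 else if dynkin_adj X i j then -1 else 0.

Lemma cartan_map (R : nzRingType) X :
  cartan R X = map_mx intr (mxz (rank X) (cartan_entry X)).
Proof.
apply/matrixP => i j; rewrite !mxE /cartan_entry -[(i : nat) == j]/(i == j).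
by case: (i == j); case: (dynkin_adj X i j); rewrite ?mulrNz -?pmulrn.
Qed.

Definition cartan_adj_rows (X : dynkin) : seq (seq int) :=
  match X with
  | A4 => [:: [:: 4; 3; 2; 1]; [:: 3; 6; 4; 2]; [:: 2; 4; 6; 3]; [:: 1; 2; 3; 4]]
  | D6 => [:: [:: 4; 4; 4; 4; 2; 2]; [:: 4; 8; 8; 8; 4; 4]; [:: 4; 8; 12; 12; 6; 6];
              [:: 4; 8; 12; 16; 8; 8]; [:: 2; 4; 6; 8; 6; 4]; [:: 2; 4; 6; 8; 4; 6]]
  | E8 => [:: [:: 2; 3; 4; 5; 6; 4; 2; 3]; [:: 3; 6; 8; 10; 12; 8; 4; 6];
              [:: 4; 8; 12; 15; 18; 12; 6; 9]; [:: 5; 10; 15; 20; 24; 16; 8; 12];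
              [:: 6; 12; 18; 24; 30; 20; 10; 15]; [:: 4; 8; 12; 16; 20; 14; 7; 10];
              [:: 2; 4; 6; 8; 10; 7; 4; 5]; [:: 3; 6; 9; 12; 15; 10; 5; 8]]
  end.

Definition cartan_adj (X : dynkin) (i j : nat) : int :=
  nth 0 (nth [::] (cartan_adj_rows X) i) j.

Definition cartan_det (X : dynkin) : int :=
  match X with A4 => 5 | D6 => 4 | E8 => 1 end.

(* The labels (theta | alpha_j) of the highest root theta, all 0 or 1. *)
Definition highest_root_labels (X : dynkin) : seq bool :=
  match X with
  | A4 => [:: true; false; false; true]
  | D6 => [:: false; true; false; false; false; false]
  | E8 => [:: true; false; false; false; false; false; false; false]
  end.

Lemma cartan_det_neq0 X : cartan_det X != 0.
Proof. by case: X. Qed.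

Lemma cartan_certificate X :
  adj_check (rank X) (cartan_adj X) (cartan_entry X) (cartan_det X) &&
  norm2_check (rank X) (cartan_adj X) (cartan_det X) (highest_root_labels X).
Proof. by case: X; vm_compute. Qed.

Lemma gen_cartan_ip (R : numFieldType) n m (G : 'M[R]_n) (V : 'M_(n, m)) a b :
  ip G (col a V) (col a V) = 2 -> gen_cartan G V a b = ip G (col a V) (col b V).
Proof. by move=> a2; rewrite mxE a2 mulrC mulrA mulVf ?mul1r ?pnatr_eq0. Qed.

Section ExtFamilyColumns.
Variables (R : nzRingType) (n : nat) (beta gamma : 'cV[R]_n) (P : 'M[R]_n).

Lemma col_ext_family_beta :
  col (lshift n (lshift 1 ord0)) (ext_family beta gamma P) = beta.
Proof. by rewrite !colKl; apply/matrixP => i j; rewrite (ord1 j) mxE. Qed.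

Lemma col_ext_family_gamma :
  col (lshift n (rshift 1 ord0)) (ext_family beta gamma P) = gamma.
Proof. by rewrite colKl colKr; apply/matrixP => i j; rewrite (ord1 j) mxE. Qed.

Lemma col_ext_family_alpha j : col (rshift 2 j) (ext_family beta gamma P) = col j P.
Proof. by rewrite colKr. Qed.

End ExtFamilyColumns.

Theorem mainTheorem4 (R : realType) (X : dynkin)
  (G : 'M[R]_(rank X)) (P : 'M[R]_(rank X)) :
  inner_product G ->
  P \in unitmx ->
  (forall i j, ip G (col i P) (col j P) = cartan R X i j) ->
  ~ exists beta gamma : 'cV[R]_(rank X),
      let C := gen_cartan G (ext_family beta gamma P) in
      [/\ ip G beta beta = 2, ip G gamma gamma = 2,
          (forall i, C i i = 2),
          (forall i j, i != j -> C i j = 0 \/ C i j = -1)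
        & \det C = 0].
Proof.
move=> [Gsym _] Pu gramE [beta [gamma /= [beta2 gamma2 _ Coff _]]].
have /andP [adjP norm2P] := cartan_certificate X.
have adj_gram : map_mx intr (mxz _ (cartan_adj X)) *m (P^T *m G *m P) =
                ((cartan_det X)%:~R)%:M.
  have -> : P^T *m G *m P = cartan R X by apply/matrixP => i j; rewrite -ip_gram.
  by rewrite cartan_map -map_mxM (adj_checkP adjP) map_scalar_mx.
set V := ext_family beta gamma P.
have off a b : ip G (col a V) (col a V) = 2 -> a != b ->
    ip G (col a V) (col b V) = 0 \/ ip G (col a V) (col b V) = -1.
  by move=> a2 ab; rewrite -gen_cartan_ip //; apply: Coff.
have beta01 j : ip G beta (col j P) = 0 \/ ip G beta (col j P) = -1.
  by have := off (lshift _ (lshift 1 ord0)) (rshift 2 j); rewrite col_ext_family_beta col_ext_family_alpha; apply.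
have gamma01 j : ip G gamma (col j P) = 0 \/ ip G gamma (col j P) = -1.
  by have := off (lshift _ (rshift 1 ord0)) (rshift 2 j); rewrite col_ext_family_gamma col_ext_family_alpha; apply.
have beta_gamma : ip G beta gamma = 2.
  by apply: (ip_norm2_coords Gsym Pu (cartan_det_neq0 X) adj_gram norm2P).
have := off (lshift _ (lshift 1 ord0)) (lshift _ (rshift 1 ord0)).
rewrite col_ext_family_beta col_ext_family_gamma beta_gamma => /(_ beta2 isT) [] /eqP.
  by rewrite pnatr_eq0.
by rewrite gt_eqF // (lt_trans (ltrN10 _)) ?ltr0n.
Qed.
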